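(* Let $G$ be a totally disconnected locally compact group. Then $C_c^\infty(G)=\mathcal P(G)$.
   Context: $C_c^\infty(G)$ (the smooth functions) is the linear span of the characteristic functions $\chi_{xH}$ with $x\in G$ and $H$ a compact open subgroup of $G$; equivalently the union over compact open subgroups $H$ of the compactly supported continuous functions constant on the cosets $xH$. $\mathcal P(G)$ is the set of $f\in C_c(G)$ such that for some compact open subgroup $H$ of $G$ there exist finitely many $f_i\in C_c(G)$ and $\phi_i\in C(H)$ with $f(xh)=\sum_i f_i(x)\phi_i(h)$ for all $x\in G,h\in H$. *)

From HB Require Import structures.
From mathcomp Require Import all_boot all_order all_algebra.
From mathcomp Require Import all_classical all_reals all_analysis.
From mathcomp Require Import complex.

Set Implicit Arguments.
Unset Strict Implicit.
Unset Printing Implicit Defensive.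

Import Order.TTheory GRing.Theory Num.Theory.
Import numFieldNormedType.Exports.
Local Open Scope classical_set_scope.
Local Open Scope ring_scope.

Definition is_topological_group (G : topologicalType)
  (mul : G -> G -> G) (inv : G -> G) (e : G) : Prop :=
  [/\ (forall x y z, mul x (mul y z) = mul (mul x y) z),
      (forall x, mul e x = x /\ mul x e = x),
      (forall x, mul (inv x) x = e /\ mul x (inv x) = e),
      continuous (fun p : G * G => mul p.1 p.2) &
      continuous inv].

Definition is_tdlc_group (G : topologicalType)
  (mul : G -> G -> G) (inv : G -> G) (e : G) : Prop :=
  [/\ is_topological_group mul inv e,
      hausdorff_space G,
      (forall x : G, exists2 K : set G, compact K & nbhs x K) &
      totally_disconnected [set: G]].

Definition is_subgroup (G : Type) (mul : G -> G -> G) (inv : G -> G) (e : G)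
  (H : set G) : Prop :=
  [/\ H e, (forall x y, H x -> H y -> H (mul x y)) & (forall x, H x -> H (inv x))].

Definition compact_open_subgroup (G : topologicalType)
  (mul : G -> G -> G) (inv : G -> G) (e : G) (H : set G) : Prop :=
  [/\ is_subgroup mul inv e H, open H & compact H].

Section Spaces.
Variables (R : realType) (G : topologicalType).
Variables (mul : G -> G -> G) (inv : G -> G) (e : G).

(* The topology of C = R[i] is the standard one, i.e. that of R x R via
   z |-> (Re z, Im z). *)
Definition C_to_R2 (z : R[i]) : R * R := let: Complex a b := z in (a, b).
Definition ccontinuous (f : G -> R[i]) : Prop := continuous (C_to_R2 \o f).
Definition ccontinuous_within (H : set G) (f : G -> R[i]) : Prop :=
  {within H, continuous (C_to_R2 \o f)}.

Definition fsupport (f : G -> R[i]) : set G := closure [set x | f x != 0].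

Definition Cc : set (G -> R[i]) :=
  [set f | ccontinuous f /\ compact (fsupport f)].

Definition coset_indicator (x : G) (H : set G) : G -> R[i] :=
  fun y => if `[< exists2 h, H h & y = mul x h >] then 1 else 0.

Definition Cc_infty : set (G -> R[i]) :=
  [set f | exists (n : nat) (c : 'I_n -> R[i]) (xs : 'I_n -> G)
             (Hs : 'I_n -> set G),
      (forall i, compact_open_subgroup mul inv e (Hs i)) /\
      f = (fun y => \sum_(i < n) c i * coset_indicator (xs i) (Hs i) y)].

Definition PG : set (G -> R[i]) :=
  [set f | Cc f /\
     exists (H : set G), compact_open_subgroup mul inv e H /\
     exists (n : nat) (fs : 'I_n -> G -> R[i]) (phis : 'I_n -> G -> R[i]),
       (forall i, Cc (fs i)) /\
       (forall i, ccontinuous_within H (phis i)) /\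
       (forall x h, H h -> f (mul x h) = \sum_(i < n) fs i x * phis i h)].

End Spaces.

(* A finite combination of indicators of cosets x H_i is right
   invariant under a compact open subgroup contained in every H_i (van Dantzig),
   hence locally constant, and it trivially splits as f(x h) = f(x) * 1.
   Conversely, if f(x h) = sum_i f_i(x) phi_i(h) on H, the translates
   h |-> f(x h) span a space W of combinations of the phi_i, detected by the
   values at finitely many points of H.  For k close to e the difference operator
   D_k w = w(k .) - w halves a norm on W; since 2 D_k = D_(k k) - D_k D_k and a
   compact open subgroup K of such k is closed under squaring, D_k = 0 on W for
   k in K (GL(W) has no small subgroups).  So f is right K-invariant, and a
   compactly supported right K-invariant function is a finite combination of
   indicators of K-cosets. *)

From HB Require Import structures.
From mathcomp Require Import all_boot all_order all_algebra.
From mathcomp Require Import all_classical all_reals all_analysis.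
From mathcomp Require Import complex ring lra.

Set Implicit Arguments.
Unset Strict Implicit.
Unset Printing Implicit Defensive.

Import Order.TTheory GRing.Theory Num.Theory.
Import numFieldNormedType.Exports.
Local Open Scope classical_set_scope.
Local Open Scope ring_scope.

Section compact_hausdorff.
Context {T : topologicalType}.

Lemma compact_directed_sub_open (C O : set T) (D : set (set T)) :
  compact C -> open O -> (exists A, D A) ->
  (forall A B, D A -> D B -> exists2 E, D E & E `<=` A `&` B) ->
  (forall A, D A -> closed A /\ A `<=` C) ->
  (forall x, (forall A, D A -> A x) -> O x) ->
  exists2 A, D A & A `<=` O.
Proof.
move=> cC oO [A0 DA0] DI Dcl DO.
apply: contrapT => nE.
have meetsCO A : D A -> (A `&` ~` O) !=set0.
  move=> DA; apply/set0P/negP => /eqP AO; apply: nE; exists A => // x Ax.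
  by apply: contrapT => nOx; have : (A `&` ~` O) x by []; rewrite AO.
pose F := filter_from D (fun A => A `&` ~` O).
have PF : ProperFilter F.
  apply: filter_from_proper => //; apply: filter_from_filter; first by exists A0.
  move=> A B DA DB; have [E DE EAB] := DI A B DA DB; exists E => // x [Ex nOx].
  by have [] := EAB x Ex; split; split.
have FC : F C by exists A0 => // x [/(Dcl _ DA0).2].
have [y [_ cly]] := cC F PF FC.
have ADy A : D A -> (A `&` ~` O) y.
  move=> DA; have : closed (A `&` ~` O).
    by apply: closedI; [exact: (Dcl _ DA).1 | exact: open_closedC].
  rewrite closure_id => ->; move=> B nB.
  by apply: cly => //; exists A.
exact: (ADy A0 DA0).2 (DO y (fun A DA => (ADy A DA).1)).
Qed.

Hypothesis hT : hausdorff_space T.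

Lemma compact_point_separation (B : set T) a : compact B -> ~ B a ->
  exists U V, [/\ open U, open V, U a, B `<=` V & U `&` V = set0].
Proof.
move=> cB nBa.
pose D := [set B `&` closure U | U in [set U | open U /\ U a]].
have [_ [U [oU Ua] <-] BU0] : exists2 E, D E & E `<=` set0.
  apply: (compact_directed_sub_open cB open0).
  - by exists (B `&` closure setT), setT => //; split=> //; exact: openT.
  - move=> _ _ [U1 [oU1 U1a] <-] [U2 [oU2 U2a] <-].
    exists (B `&` closure (U1 `&` U2)); first by exists (U1 `&` U2); split => //; exact: openI.
    by move=> x [Bx /closureI[]].
  - move=> _ [U _ <-]; split; last by move=> x [].
    by apply: closedI; [exact: compact_closed | exact: closed_closure].
  move=> x Dx.
  have [Bx _] := Dx _ (ex_intro2 _ _ setT (conj openT I) erefl).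
  have ax : a != x by apply/eqP => ax; apply: nBa; rewrite ax.
  move: hT; rewrite open_hausdorff => /(_ _ _ ax) [[U V] /= [/set_mem Ua /set_mem Vx]].
  move=> [oU oV /eqP UV0].
  have [_ clUx] := Dx _ (ex_intro2 _ _ U (conj oU Ua) erefl).
  have [z [Uz Vz]] := clUx V (open_nbhs_nbhs (conj oV Vx)).
  by have : (U `&` V) z by []; rewrite UV0.
exists U, (~` closure U); split => //.
- exact/closed_openC/closed_closure.
- by move=> b Bb clUb; apply: (BU0 b).
- by rewrite -subsets_disjoint; apply: subset_closure.
Qed.

Lemma compact_separation (A B : set T) : compact A -> compact B ->
  A `&` B = set0 ->
  exists U V, [/\ open U, open V, A `<=` U, B `<=` V & U `&` V = set0].
Proof.
move=> cA cB AB0.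
pose D := [set A `&` closure V | V in [set V | open V /\ B `<=` V]].
have [_ [V [oV BV] <-] AV0] : exists2 E, D E & E `<=` set0.
  apply: (compact_directed_sub_open cA open0).
  - by exists (A `&` closure setT), setT => //; split=> //; exact: openT.
  - move=> _ _ [V1 [oV1 BV1] <-] [V2 [oV2 BV2] <-].
    exists (A `&` closure (V1 `&` V2)).
      by exists (V1 `&` V2); split => //; [exact: openI | move=> z Bz; split; auto].
    by move=> x [Ax /closureI[]].
  - move=> _ [V _ <-]; split; last by move=> x [].
    by apply: closedI; [exact: compact_closed | exact: closed_closure].
  move=> x Dx.
  have [Ax _] := Dx _ (ex_intro2 _ _ setT (conj openT (fun _ _ => I)) erefl).
  have nBx : ~ B x by move=> Bx; have : (A `&` B) x by []; rewrite AB0.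
  have [U [V [oU oV Ux BV UV0]]] := compact_point_separation cB nBx.
  have [_ clVx] := Dx _ (ex_intro2 _ _ V (conj oV BV) erefl).
  have [z [Vz Uz]] := clVx U (open_nbhs_nbhs (conj oU Ux)).
  by have : (U `&` V) z by []; rewrite UV0.
exists (~` closure V), V; split => //.
- exact/closed_openC/closed_closure.
- by move=> a Aa clVa; apply: (AV0 a).
- by rewrite setIC -subsets_disjoint; apply: subset_closure.
Qed.

End compact_hausdorff.

Section quasi_component.
Context {T : topologicalType}.
Implicit Types C E : set T.

Definition rel_clopen C E := [/\ E `<=` C, closed E & closed (C `\` E)].

Lemma rel_clopen_refl C : closed C -> rel_clopen C C.
Proof. by move=> clC; split => //; rewrite setDv; exact: closed0. Qed.

Lemma rel_clopenI C E1 E2 :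
  rel_clopen C E1 -> rel_clopen C E2 -> rel_clopen C (E1 `&` E2).
Proof.
move=> [E1C clE1 clCE1] [_ clE2 clCE2]; split.
- by move=> y [/E1C].
- exact: closedI.
- by rewrite setDIr; exact: closedU.
Qed.

Lemma rel_clopenI_open C E U V : rel_clopen C E -> open U -> open V ->
  U `&` V = set0 -> E `<=` U `|` V -> rel_clopen C (E `&` U).
Proof.
move=> [EC clE clCE] oU oV UV0 EUV.
have EU_EV : E `&` U = E `&` ~` V.
  apply/seteqP; split => y [Ey yU]; split => //.
    by move=> Vy; have : (U `&` V) y by []; rewrite UV0.
  by case: (EUV y Ey).
split.
- by move=> y [/EC].
- by rewrite EU_EV; apply: closedI => //; exact: open_closedC.
have -> : C `\` (E `&` U) = (C `\` E) `|` (E `&` ~` U).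
  apply/seteqP; split => y.
    move=> [Cy nEUy]; have [Ey|] := pselect (E y); last by left.
    by right; split => // Uy; exact: nEUy.
  by case=> [[Cy nEy]|[Ey nUy]]; split => //; [case | exact: EC | case].
by apply: closedU => //; apply: closedI => //; exact: open_closedC.
Qed.

Definition quasi_component C (x : T) :=
  [set y | forall E, rel_clopen C E -> E x -> E y].

Lemma quasi_component_sub_open C x U : compact C -> closed C -> C x -> open U ->
  quasi_component C x `<=` U ->
  exists2 E, rel_clopen C E /\ E x & E `<=` U.
Proof.
move=> cC clC Cx oU QU; apply: (compact_directed_sub_open cC oU).
- by exists C; split; [exact: rel_clopen_refl|].
- move=> E1 E2 [rE1 E1x] [rE2 E2x]; exists (E1 `&` E2) => //.
  by split; [exact: rel_clopenI|].
- by move=> E [[EC clE _] _].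
by move=> y Ey; apply: QU => E rE Ex; exact: Ey.
Qed.

Lemma quasi_component_connected C x : hausdorff_space T -> compact C -> C x ->
  connected (quasi_component C x).
Proof.
move=> hT cC Cx; set Q := quasi_component C x.
have clC := compact_closed hT cC.
have QC : Q `<=` C by move=> y; apply; [exact: rel_clopen_refl|].
have Qx : Q x by [].
have clQ : closed Q.
  rewrite (_ : Q = \bigcap_(E in [set E | rel_clopen C E /\ E x]) E).
    by apply: closed_bigI => E [[]].
  by apply/seteqP; split=> y Qy E; [case; exact: Qy | move=> *; exact: Qy].
have cQ : compact Q := subclosed_compact clQ cC QC.
move=> B [b Bb] [U oU BQU] [Z clZ BQZ].
pose B' := Q `&` ~` U.
have cB : compact B.
  by rewrite BQZ; apply: (subclosed_compact _ cQ) => //; exact: closedI.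
have cB' : compact B'.
  apply: (subclosed_compact _ cQ); last by move=> y [].
  by apply: closedI => //; exact: open_closedC.
have BB'0 : B `&` B' = set0.
  by rewrite BQU; apply/seteqP; split => y // [[_ Uy] [_ nUy]].
have [U1 [U2 [oU1 oU2 BU1 B'U2 U120]]] := compact_separation hT cB cB' BB'0.
have U12 y : U1 y -> U2 y -> False.
  by move=> ? ?; have : (U1 `&` U2) y by []; rewrite U120.
have QU12 : Q `<=` U1 `|` U2.
  move=> y Qy; have [Uy|nUy] := pselect (U y); last by right; apply: B'U2.
  by left; apply: BU1; rewrite BQU.
have [E [rE Ex] EU12] := quasi_component_sub_open cC clC Cx (openU oU1 oU2) QU12.
case: (QU12 x Qx) => [U1x|U2x].
  have rEU1 := rel_clopenI_open rE oU1 oU2 U120 EU12.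
  apply/seteqP; split; first by rewrite BQU => y [].
  move=> y Qy; rewrite BQU; split => //; apply: contrapT => nUy.
  exact: U12 (proj2 (Qy _ rEU1 (conj Ex U1x))) (B'U2 y (conj Qy nUy)).
have EU21 : E `<=` U2 `|` U1 by move=> y /EU12 [|]; [right|left].
have U210 : U2 `&` U1 = set0 by rewrite setIC.
have rEU2 := rel_clopenI_open rE oU2 oU1 U210 EU21.
have Qb : Q b by move: Bb; rewrite BQU => -[].
exfalso; exact: U12 (BU1 _ Bb) (proj2 (Qb _ rEU2 (conj Ex U2x))).
Qed.

(* In a totally disconnected space the quasi-component, being connected, is a point. *)
Lemma compact_rel_clopen_sub_open C O x :
  hausdorff_space T -> totally_disconnected [set: T] ->
  compact C -> C x -> open O -> O x ->
  exists E, [/\ rel_clopen C E, E x & E `<=` O].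
Proof.
move=> hT tdT cC Cx oO Ox.
have Q1 : quasi_component C x `<=` [set x].
  rewrite -(tdT x I); apply: connected_component_max => //.
  exact: quasi_component_connected.
have QO : quasi_component C x `<=` O by move=> y /Q1 ->.
have [E [rE Ex] EO] := quasi_component_sub_open cC (compact_closed hT cC) Cx oO QO.
by exists E.
Qed.

End quasi_component.

Section topological_group.
Context {G : topologicalType} (mul : G -> G -> G) (inv : G -> G) (e : G).
Hypothesis tgG : is_topological_group mul inv e.

Lemma grp_mulA x y z : mul x (mul y z) = mul (mul x y) z.
Proof. by case: tgG => mulA _ _ _ _; apply: mulA. Qed.
Lemma grp_mul1g x : mul e x = x. Proof. by case: tgG => _ h _ _ _; case: (h x). Qed.
Lemma grp_mulg1 x : mul x e = x. Proof. by case: tgG => _ h _ _ _; case: (h x). Qed.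
Lemma grp_mulVg x : mul (inv x) x = e. Proof. by case: tgG => _ _ h _ _; case: (h x). Qed.
Lemma grp_mulgV x : mul x (inv x) = e. Proof. by case: tgG => _ _ h _ _; case: (h x). Qed.

Lemma grp_mulKg x y : mul (inv x) (mul x y) = y.
Proof. by rewrite grp_mulA grp_mulVg grp_mul1g. Qed.
Lemma grp_mulKVg x y : mul x (mul (inv x) y) = y.
Proof. by rewrite grp_mulA grp_mulgV grp_mul1g. Qed.

Lemma grp_inv_uniq x y : mul x y = e -> inv x = y.
Proof. by move=> xy; rewrite -[inv x]grp_mulg1 -xy grp_mulA grp_mulVg grp_mul1g. Qed.
Lemma grp_invMg x y : inv (mul x y) = mul (inv y) (inv x).
Proof.
apply: grp_inv_uniq.
by rewrite grp_mulA -[mul (mul x y) (inv y)]grp_mulA grp_mulgV grp_mulg1 grp_mulgV.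
Qed.
Lemma grp_invgK x : inv (inv x) = x.
Proof. by apply: grp_inv_uniq; rewrite grp_mulVg. Qed.
Lemma grp_inv1 : inv e = e.
Proof. by apply: grp_inv_uniq; rewrite grp_mul1g. Qed.

Lemma grp_continuous_mul : continuous (fun p : G * G => mul p.1 p.2).
Proof. by case: tgG. Qed.
Lemma grp_continuous_inv : continuous inv. Proof. by case: tgG. Qed.

Lemma grp_continuous_mull a : continuous (mul a).
Proof.
move=> x; have pair_x : {for x, continuous (fun z : G => (a, z))}.
  by apply: cvg_pair; [exact: cvg_cst | exact: cvg_id].
exact: continuous_comp pair_x (@grp_continuous_mul (a, x)).
Qed.

Lemma grp_continuous_mulr a : continuous (mul^~ a).
Proof.
move=> x; have pair_x : {for x, continuous (fun z : G => (z, a))}.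
  by apply: cvg_pair; [exact: cvg_id | exact: cvg_cst].
exact: continuous_comp pair_x (@grp_continuous_mul (x, a)).
Qed.

Lemma nbhs1_translate g (P : set G) :
  nbhs e P -> \forall z \near g, P (mul (inv g) z).
Proof.
move=> eP; have mul_g := @grp_continuous_mull (inv g) g.
by rewrite /continuous_at grp_mulVg in mul_g; exact: mul_g.
Qed.

Lemma compact_open_subgroup_nbhs1 H :
  compact_open_subgroup mul inv e H -> nbhs e H.
Proof. by case=> [[He _ _] oH _]; apply: open_nbhs_nbhs. Qed.

(* The stabiliser of W under right translations is a subgroup; it is open by
   a tube-lemma argument over the compact set W. *)
Lemma compact_open_stabilizer (W : set G) : compact W -> open W -> W e ->
  exists K, compact_open_subgroup mul inv e K /\ K `<=` W.
Proof.
move=> cW oW We.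
pose K := [set g | forall w, W w -> W (mul w g) /\ W (mul w (inv g))].
have Wnear : \forall v \near e, forall w, W w -> W (mul w v).
  apply: ((compact_near_coveringP W).1 cW G (nbhs e) (fun v w => W (mul w v))).
  move=> x Wx; apply: (@grp_continuous_mul (x, e)) => /=.
  by apply: open_nbhs_nbhs; rewrite grp_mulg1.
have WVnear : \forall v \near e, forall w, W w -> W (mul w (inv v)).
  have inv_e := @grp_continuous_inv e; rewrite /continuous_at grp_inv1 in inv_e.
  exact: inv_e Wnear.
have eK : nbhs e K by apply: filterS (filterI Wnear WVnear) => v [? ?] w Ww; split; auto.
have KW : K `<=` W by move=> g Kg; rewrite -(grp_mul1g g); apply: (Kg e We).1.
have Ke : K e by move=> w Ww; rewrite grp_inv1 grp_mulg1.
have KM x y : K x -> K y -> K (mul x y).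
  move=> Kx Ky w Ww; rewrite grp_invMg !grp_mulA; split.
    by apply: (Ky _ _).1; apply: (Kx _ Ww).1.
  by apply: (Kx _ _).2; apply: (Ky _ Ww).2.
have KV x : K x -> K (inv x).
  by move=> Kx w Ww; rewrite grp_invgK; have [] := Kx w Ww.
have oK : open K.
  rewrite openE => g Kg; apply: filterS (nbhs1_translate g eK) => z Kz.
  by rewrite -(grp_mulKVg g z); apply: KM.
have clK : closed K.
  move=> y cly; have [z [Kz Kyz]] := cly _ (nbhs1_translate y eK).
  by have := KM _ _ Kz (KV _ Kyz); rewrite grp_invMg grp_invgK grp_mulA grp_mulgV grp_mul1g.
by exists K; split => //; split => //; exact: subclosed_compact clK cW KW.
Qed.

End topological_group.

Lemma van_dantzig (G : topologicalType) (mul : G -> G -> G) (inv : G -> G)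
    (e : G) (N : set G) :
  is_tdlc_group mul inv e -> nbhs e N ->
  exists K, compact_open_subgroup mul inv e K /\ K `<=` N.
Proof.
move=> [tgG hG lcG tdG] eN.
have [C cC eC] := lcG e.
have : nbhs e (C `&` N) by exact: filterI.
rewrite nbhsE; case=> O [oO Oe] OCN.
have [W [[WC clW clCW] We WO]] :=
  compact_rel_clopen_sub_open hG tdG cC (nbhs_singleton eC) oO Oe.
have oW : open W.
  have -> : W = O `&` ~` (C `\` W).
    apply/seteqP; split => [y Wy|y [Oy nCWy]]; first by split; [exact: WO | case].
    by apply: contrapT => nWy; apply: nCWy; split => //; have [] := OCN y Oy.
  by apply: openI => //; exact: closed_openC.
have [K [coK KW]] := compact_open_stabilizer tgG (subclosed_compact clW cC WC) oW We.
by exists K; split => // g /KW /WO /OCN [].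
Qed.

Section coset_functions.
Context {R : realType} {G : topologicalType} (mul : G -> G -> G) (inv : G -> G) (e : G).
Hypothesis tgG : is_topological_group mul inv e.
Implicit Types (K : set G) (f : G -> R[i]).

Definition right_invariant K f := forall x k, K k -> f (mul x k) = f x.

Lemma coset_indicatorE x K y :
  coset_indicator R mul x K y = if `[< K (mul (inv x) y) >] then 1 else 0.
Proof.
congr (if _ then _ else _); apply/asboolP/asboolP.
  by move=> [h Kh ->]; rewrite (grp_mulKg tgG).
by move=> Kxy; exists (mul (inv x) y) => //; rewrite (grp_mulKVg tgG).
Qed.

Lemma coset_indicator_right_invariant x K :
  is_subgroup mul inv e K -> right_invariant K (coset_indicator R mul x K).
Proof.
move=> [_ KM KV] y k Kk; rewrite !coset_indicatorE.
suff -> : K (mul (inv x) (mul y k)) = K (mul (inv x) y) by [].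
apply/propext; rewrite (grp_mulA tgG); split => [Kxyk|Kxy]; last exact: KM.
have := KM _ _ Kxyk (KV _ Kk).
by rewrite -(grp_mulA tgG) (grp_mulgV tgG) (grp_mulg1 tgG).
Qed.

Lemma right_invariant_ccontinuous K f : compact_open_subgroup mul inv e K ->
  right_invariant K f -> ccontinuous f.
Proof.
move=> coK fK y; apply: near_cst_continuous.
apply: filterS (nbhs1_translate tgG y (compact_open_subgroup_nbhs1 coK)) => z Kz /=.
by rewrite -{1}(grp_mulKVg tgG y z) fK.
Qed.

Lemma open_coset x K : open K -> open [set z | K (mul (inv x) z)].
Proof.
move=> oK; rewrite openE => z Kz.
have mul_x := @grp_continuous_mull _ _ _ _ tgG (inv x) z.
exact: mul_x _ (open_nbhs_nbhs (conj oK Kz)).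
Qed.

Lemma compact_cover_cosets K S : compact_open_subgroup mul inv e K ->
  compact S -> closed S ->
  exists n (xs : 'I_n -> G), forall y, S y -> exists j, K (mul (inv (xs j)) y).
Proof.
move=> [[Ke _ _] oK _] cS clS.
pose U (s : seq G) := \bigcup_(x in [set x | x \in s]) [set z | K (mul (inv x) z)].
have [_ [s _ <-] SU] : exists2 A, [set S `\` U s | s in setT] A & A `<=` set0.
  apply: (compact_directed_sub_open cS open0); first by exists (S `\` U [::]), [::].
  - move=> _ _ [s1 _ <-] [s2 _ <-]; exists (S `\` U (s1 ++ s2)); first by exists (s1 ++ s2).
    move=> z [Sz nUz]; split; split=> // -[x xs Kxz]; apply: nUz.
      by exists x => //=; rewrite mem_cat xs.
    by exists x => //=; rewrite mem_cat xs orbT.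
  - move=> _ [s _ <-]; split; last by move=> z [].
    apply: closedI => //; apply: open_closedC; apply: bigcup_open => x _.
    exact: open_coset.
  move=> y Sy; have [Sy' nUy] := Sy _ (ex_intro2 _ _ [:: y] I erefl).
  by apply: nUy; exists y; rewrite /= ?inE ?(grp_mulVg tgG).
exists (size s), (fun j => nth e s j) => y Sy.
have [x sx Kxy] : U s y by apply: contrapT => nUy; exact: SU y (conj Sy nUy).
have xs_lt : (index x s < size s)%N by rewrite index_mem.
by exists (Ordinal xs_lt); rewrite /= nth_index.
Qed.

Section coset_decomposition.
Variables (K : set G) (n : nat) (xs : 'I_n -> G).

Let hits y : {set 'I_n} := finset (fun j => `[< K (mul (inv (xs j)) y) >]).

(* Each coset is counted once by dividing by the number of [xs j] lying in it. *)
Lemma right_invariant_coset_sum f : is_subgroup mul inv e K ->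
  right_invariant K f -> (forall y, f y != 0 -> exists j, K (mul (inv (xs j)) y)) ->
  f = (fun y => \sum_(j < n)
         (f (xs j) / #|hits (xs j)|%:R) * coset_indicator R mul (xs j) K y).
Proof.
move=> [_ KM KV] fK fcover; apply/funext => y.
have same_coset j : j \in hits y -> f (xs j) = f y /\ hits (xs j) = hits y.
  rewrite inE => /asboolP Kjy; split.
    by rewrite -(fK _ _ Kjy) (grp_mulKVg tgG).
  apply/setP => l; rewrite !inE; apply/asboolP/asboolP => Kl.
    by rewrite -(grp_mulKVg tgG (xs j) y) (grp_mulA tgG); exact: KM.
  have := KM _ _ Kl (KV _ Kjy).
  by rewrite (grp_invMg tgG) (grp_invgK tgG) -(grp_mulA tgG) (grp_mulKVg tgG).
rewrite (bigID (mem (hits y))) /= [X in _ + X]big1 ?addr0 => [|j]; last first.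
  by rewrite coset_indicatorE inE => /negbTE ->; rewrite mulr0.
rewrite (eq_bigr (fun=> f y / #|hits y|%:R)) => [|j jy]; last first.
  have [-> ->] := same_coset j jy.
  by move: jy; rewrite coset_indicatorE inE => ->; rewrite mulr1.
rewrite sumr_const; have [hy0|hy0] := eqVneq #|hits y| 0%N.
  rewrite hy0 mulr0n; apply/eqP; apply: contraT => /fcover [j Kjy].
  by have := card0_eq hy0 j; rewrite inE => /asboolP; case.
by rewrite -[(f y / _) *+ _]mulr_natr divfK // pnatr_eq0.
Qed.

End coset_decomposition.

Lemma right_invariant_Cc_infty K f : compact_open_subgroup mul inv e K ->
  Cc f -> right_invariant K f -> Cc_infty mul inv e f.
Proof.
move=> coK [_ cf] fK; have [sK _ _] := coK.
have [n [xs cover]] := compact_cover_cosets coK cf (@closed_closure _ _).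
have fE := right_invariant_coset_sum (xs := xs) sK fK.
exists n; eexists; exists xs, (fun=> K); split => //; apply: fE => y fy.
exact/cover/subset_closure.
Qed.

Lemma coset_sum_compact_support n (c : 'I_n -> R[i]) (xs : 'I_n -> G)
    (Hs : 'I_n -> set G) :
  hausdorff_space G -> (forall i, compact (Hs i)) ->
  compact (fsupport (fun y => \sum_(i < n) c i * coset_indicator R mul (xs i) (Hs i) y)).
Proof.
move=> hG cHs.
pose S := \bigcup_(i in [set` enum 'I_n]) (mul (xs i) @` Hs i).
have cS : compact S.
  rewrite /S bigcup_seq; apply: bigsetU_compact => i _.
  apply: continuous_compact; last exact: cHs.
  exact/continuous_subspaceT/(grp_continuous_mull tgG).
apply: (subclosed_compact (@closed_closure _ _) cS).
have := compact_closed hG cS; rewrite closure_id => ->; apply: closureS => y /=.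
move=> /eqP Fy0; apply: contrapT => nSy; apply: Fy0; apply: big1 => i _.
rewrite /coset_indicator.
case: asboolP => [[h Hh yE]|_]; last by rewrite mulr0.
by exfalso; apply: nSy; exists i; rewrite /= ?mem_enum //; exists h.
Qed.

End coset_functions.

Lemma Cc_infty_sub_PG (R : realType) (G : topologicalType) (mul : G -> G -> G)
    (inv : G -> G) (e : G) :
  is_tdlc_group mul inv e -> @Cc_infty R G mul inv e `<=` PG mul inv e.
Proof.
move=> tdlcG _ [n [c [xs [Hs [coHs ->]]]]].
have [tgG hG _ _] := tdlcG.
set F := fun y => _.
have [K [coK KHs]] : exists K, compact_open_subgroup mul inv e K /\
    K `<=` [set k | forall i, Hs i k].
  apply: van_dantzig => //; apply: filter_forall => i.
  exact: compact_open_subgroup_nbhs1.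
have FK : right_invariant mul K F.
  move=> y k Kk; apply: eq_bigr => i _.
  by rewrite (coset_indicator_right_invariant tgG) //; [case: (coHs i) | exact: KHs].
have CcF : Cc F.
  split; first exact: (right_invariant_ccontinuous tgG coK FK).
  by apply: (coset_sum_compact_support tgG) => // i; case: (coHs i).
split => //; exists K; split => //.
exists 1%N, (fun=> F), (fun=> fun=> 1); split => //; split.
  by move=> _; apply: continuous_subspaceT => x; exact: cvg_cst.
by move=> x h Kh; rewrite big_ord1 mulr1 FK.
Qed.

Section cnorm1.
Context {R : realType}.
Implicit Types x y : R[i].

Definition cnorm1 x : R := let: Complex a b := x in `|a| + `|b|.

Lemma cnorm1_ge0 x : 0 <= cnorm1 x. Proof. by case: x => a b; rewrite addr_ge0. Qed.

Lemma cnorm1_eq0 x : cnorm1 x = 0 -> x = 0.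
Proof.
case: x => a b /eqP; rewrite paddr_eq0 // !normr_eq0 => /andP[/eqP /= -> /eqP /= ->].
by [].
Qed.

Lemma cnorm1D x y : cnorm1 (x + y) <= cnorm1 x + cnorm1 y.
Proof.
case: x y => [a b] [c d]; rewrite /cnorm1 /=.
by have := ler_normD a c; have := ler_normD b d; lra.
Qed.

Lemma cnorm1N x : cnorm1 (- x) = cnorm1 x.
Proof. by case: x => a b; rewrite /cnorm1 /= !normrN. Qed.

Lemma cnorm1B x y : cnorm1 (x - y) <= cnorm1 x + cnorm1 y.
Proof. by rewrite -(cnorm1N y); exact: cnorm1D. Qed.

Lemma cnorm1_double x : cnorm1 (x + x) = 2 * cnorm1 x.
Proof. by case: x => a b; rewrite /cnorm1 /= -!mulr2n !normrMn; lra. Qed.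

Lemma cnorm1M x y : cnorm1 (x * y) <= cnorm1 x * cnorm1 y.
Proof.
case: x y => [a b] [c d]; rewrite /cnorm1 /=.
have := ler_normB (a * c) (b * d); have := ler_normD (a * d) (b * c).
rewrite !normrM.
have := normr_ge0 a; have := normr_ge0 b; have := normr_ge0 c; have := normr_ge0 d.
nra.
Qed.

Lemma cnorm1_sum (I : finType) (F : I -> R[i]) :
  cnorm1 (\sum_i F i) <= \sum_i cnorm1 (F i).
Proof.
apply: (big_ind2 (fun z r => cnorm1 z <= r)) => //.
  by rewrite /cnorm1 /= normr0 addr0.
by move=> x1 x2 y1 y2 h1 h2; apply: le_trans (cnorm1D _ _) _; exact: lerD.
Qed.

End cnorm1.

Lemma geometric_ub_le0 (R : realType) (d a z : R) : `|z| < 1 ->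
  (forall m, d <= a * z ^+ m) -> d <= 0.
Proof.
move=> z1 dgeo; have geo0 := cvg_geometric a z1.
rewrite -(cvg_lim _ geo0) //; apply: limr_ge; first by apply/cvg_ex; exists 0.
by apply: nearW => m; exact: dgeo.
Qed.

Section determining_points.
Variables (F : fieldType) (T : eqType) (t0 : T) (H : set T) (n : nat).
Variable phis : 'I_n -> T -> F.

Definition eval_mx (P : seq T) : 'M[F]_(n, size P) :=
  \matrix_(i, j) phis i (nth t0 P j).

Definition lcomb (a : 'rV[F]_n) (t : T) : F := \sum_i a 0 i * phis i t.

Definition determining (P : seq T) :=
  forall a, a *m eval_mx P = 0 -> forall t, H t -> lcomb a t = 0.

Lemma mul_eval_mx P a j : (a *m eval_mx P) 0 j = lcomb a (nth t0 P j).
Proof. by rewrite !mxE; apply: eq_bigr => i _; rewrite mxE. Qed.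

Lemma lcombB a b t : lcomb (a - b) t = lcomb a t - lcomb b t.
Proof. by rewrite /lcomb -sumrB; apply: eq_bigr => i _; rewrite !mxE mulrBl. Qed.

(* Adding a point where some combination vanishing on P does not vanish
   strictly shrinks the kernel of the evaluation matrix. *)
Lemma determining_step P : ~ determining P -> (forall p, p \in P -> H p) ->
  exists2 P', (forall p, p \in P' -> H p) &
    (\rank (kermx (eval_mx P')) < \rank (kermx (eval_mx P)))%N.
Proof.
move=> ndetP PH.
have [a aP [t Ht at0]] : exists2 a, a *m eval_mx P = 0 &
    exists2 t, H t & lcomb a t != 0.
  apply: contrapT => nex; apply: ndetP => a aP t Ht; apply: contrapT => at0.
  by apply: nex; exists a => //; exists t => //; apply/eqP.
exists (t :: P); first by move=> p; rewrite inE => /orP[/eqP ->|/PH].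
have ker_sub : (kermx (eval_mx (t :: P)) <= kermx (eval_mx P))%MS.
  apply/sub_kermxP/matrixP => k j.
  have := congr1 (fun M : 'M[F]_(n, (size P).+1) => M k (lift ord0 j)) (mulmx_ker (eval_mx (t :: P))).
  rewrite !mxE /= => kerE; rewrite -[RHS]kerE; apply: eq_bigr => i _; rewrite !mxE /=.
  by congr (_ * phis i _); rewrite /bump.
suff : (kermx (eval_mx (t :: P)) < kermx (eval_mx P))%MS by rewrite ltmxErank => /andP[].
rewrite ltmxE ker_sub /=; apply/negP => ker_sup.
have /sub_kermxP/matrixP/(_ 0 ord0) : (a <= kermx (eval_mx (t :: P)))%MS.
  by apply: submx_trans ker_sup; apply/sub_kermxP.
by rewrite mul_eval_mx mxE => /eqP; rewrite (negbTE at0).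
Qed.

Lemma exists_determining_points : exists2 P, (forall p, p \in P -> H p) & determining P.
Proof.
suff : forall r P, (forall p, p \in P -> H p) -> (\rank (kermx (eval_mx P)) <= r)%N ->
    exists2 P, (forall p, p \in P -> H p) & determining P.
  by move=> /(_ n [::]); apply => //; exact: rank_leq_col.
elim=> [|r IH] P PH rkP; have [detP|ndetP] := pselect (determining P);
  try by exists P.
  have [P' _] := determining_step ndetP PH.
  by move: rkP; rewrite leqn0 => /eqP ->.
have [P' P'H rkP'] := determining_step ndetP PH.
by apply: (IH P') => //; rewrite -ltnS (leq_trans rkP').
Qed.

End determining_points.

Definition ldiff {G : Type} {Z : zmodType} (mul : G -> G -> G) (k : G) (w : G -> Z) :=
  fun h => w (mul k h) - w h.

Lemma ldiff_sqr {G : Type} {Z : zmodType} (mul : G -> G -> G) k (w : G -> Z) h :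
  (forall x y z, mul x (mul y z) = mul (mul x y) z) ->
  ldiff mul k w h + ldiff mul k w h =
    ldiff mul (mul k k) w h - ldiff mul k (ldiff mul k w) h.
Proof.
move=> mulA; rewrite /ldiff -mulA [in RHS]opprB [in RHS]addrCA.
by congr (_ + _); rewrite opprB addrC subrKA.
Qed.

Section no_small_subgroups.
Variables (R : realType) (G : eqType) (mul : G -> G -> G) (t0 : G).
Hypothesis mulA : forall x y z, mul x (mul y z) = mul (mul x y) z.
Variables (H : set G) (n : nat) (phis : 'I_n -> G -> R[i]) (V : set (G -> R[i])).
Hypothesis mulH : forall x y, H x -> H y -> H (mul x y).
Hypothesis V_ldiff : forall k w, H k -> V w -> V (ldiff mul k w).
Hypothesis V_lcomb : forall w, V w -> exists a, forall h, H h -> w h = lcomb phis a h.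
Variables (P : seq G).
Hypotheses (PH : forall p, p \in P -> H p) (detP : determining t0 H phis P).

Let pt (j : 'I_(size P)) := nth t0 P j.
Let pinvM := pinvmx (eval_mx t0 phis P).

Definition pnorm (w : G -> R[i]) : R := \sum_j cnorm1 (w (pt j)).

Definition coef (w : G -> R[i]) := \row_j w (pt j) *m pinvM.

Definition coef_bound : R := \sum_j \sum_i cnorm1 (pinvM j i).

(* The contraction radius: it makes [size P * n * coef_bound * nss_radius <= 1/2]. *)
Definition nss_radius : R := (2 * ((size P)%:R * n%:R * coef_bound + 1))^-1.

Definition translation_small (k : G) :=
  forall j i, cnorm1 (phis i (mul k (pt j)) - phis i (pt j)) <= nss_radius.

Lemma pt_in_H j : H (pt j). Proof. exact/PH/mem_nth. Qed.

Lemma pnorm_ge0 w : 0 <= pnorm w.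
Proof. by apply: sumr_ge0 => j _; exact: cnorm1_ge0. Qed.

Lemma coef_bound_ge0 : 0 <= coef_bound.
Proof. by do 2![apply: sumr_ge0 => ? _]; exact: cnorm1_ge0. Qed.

Lemma nss_radius_gt0 : 0 < nss_radius.
Proof. by rewrite invr_gt0 mulr_gt0 // ltr_wpDl // mulr_ge0 // coef_bound_ge0. Qed.

Lemma lcomb_coef w : V w -> forall h, H h -> w h = lcomb phis (coef w) h.
Proof.
move=> Vw; have [a wa] := V_lcomb Vw.
have wP : \row_j w (pt j) = a *m eval_mx t0 phis P.
  by apply/matrixP => i j; rewrite ord1 mxE mul_eval_mx wa //; exact: pt_in_H.
have coefP : coef w *m eval_mx t0 phis P = \row_j w (pt j).
  by rewrite /coef wP mulmxKpV // submxMl.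
have coef_a : (coef w - a) *m eval_mx t0 phis P = 0 by rewrite mulmxBl coefP wP subrr.
move=> h Hh; apply/eqP; rewrite wa // eq_sym -subr_eq0 -lcombB.
by rewrite (detP coef_a Hh).
Qed.

Lemma cnorm1_coef w i : cnorm1 (coef w 0 i) <= coef_bound * pnorm w.
Proof.
rewrite mxE; apply: le_trans (cnorm1_sum _) _.
rewrite /pnorm mulr_sumr; apply: ler_sum => j _; rewrite mxE mulrC.
apply: le_trans (cnorm1M _ _) _; apply: ler_wpM2r; first exact: cnorm1_ge0.
rewrite /coef_bound (bigD1 j) //= (bigD1 i) //= -addrA lerDl.
by rewrite addr_ge0 //; do ?[apply: sumr_ge0 => ? _]; exact: cnorm1_ge0.
Qed.

Lemma ldiff_contraction k w : H k -> translation_small k -> V w ->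
  pnorm (ldiff mul k w) <= pnorm w / 2.
Proof.
move=> Hk ksmall Vw.
set A := (size P)%:R * n%:R * coef_bound.
have A_ge0 : 0 <= A by rewrite mulr_ge0 // coef_bound_ge0.
have A_radius : A * nss_radius <= 1 / 2.
  rewrite /nss_radius -/A -[A * _]/(A / _) ler_pdivrMr; first lra.
  by rewrite mulr_gt0 // ltr_wpDl.
have pt_bound j : cnorm1 (ldiff mul k w (pt j)) <=
    n%:R * (coef_bound * pnorm w * nss_radius).
  rewrite /ldiff (lcomb_coef Vw (mulH Hk (pt_in_H j))) (lcomb_coef Vw (pt_in_H j)).
  rewrite /lcomb -sumrB.
  under eq_bigr => i _ do rewrite -mulrBr.
  apply: le_trans (cnorm1_sum _) _.
  rewrite mulr_natl -[n in _ *+ n]card_ord -sumr_const; apply: ler_sum => i _.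
  apply: le_trans (cnorm1M _ _) _.
  by apply: ler_pM => //; [exact: cnorm1_ge0 | exact: cnorm1_ge0 | exact: cnorm1_coef].
apply: le_trans (ler_sum _ (fun j _ => pt_bound j)) _.
rewrite sumr_const card_ord -mulr_natl.
have := ler_wpM2r (pnorm_ge0 w) A_radius; rewrite /A; lra.
Qed.

Lemma pnorm_eq0 w : V w -> pnorm w = 0 -> forall h, H h -> w h = 0.
Proof.
move=> Vw /eqP; rewrite psumr_eq0 => [/allP w0|j _]; last exact: cnorm1_ge0.
have [a wa] := V_lcomb Vw.
have aP : a *m eval_mx t0 phis P = 0.
  apply/matrixP => i j; rewrite ord1 mul_eval_mx mxE -wa; last exact: pt_in_H.
  by apply: cnorm1_eq0; apply/eqP; exact: w0 (mem_index_enum _).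
by move=> h Hh; rewrite wa // detP.
Qed.

Section square_closed.
Variable K : set G.
Hypotheses (KH : K `<=` H) (Ksqr : forall k, K k -> K (mul k k)).
Hypothesis Ksmall : forall k, K k -> translation_small k.

(* From [2 D_k = D_(k k) - D_k D_k] and the contraction [D_k <= 1/2]. *)
Lemma ldiff_geometric m k w : K k -> V w ->
  pnorm (ldiff mul k w) <= pnorm w * (2/3) ^+ m.
Proof.
elim: m k w => [|m IH] k w Kk Vw.
  rewrite expr0 mulr1; apply: le_trans (ldiff_contraction (KH Kk) (Ksmall Kk) Vw) _.
  by have := pnorm_ge0 w; lra.
have two_ldiff : 2 * pnorm (ldiff mul k w) <=
    pnorm (ldiff mul (mul k k) w) + pnorm (ldiff mul k (ldiff mul k w)).
  rewrite /pnorm mulr_sumr -big_split; apply: ler_sum => j _.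
  by rewrite -cnorm1_double ldiff_sqr //; exact: cnorm1B.
have := IH _ _ (Ksqr Kk) Vw.
have := ldiff_contraction (KH Kk) (Ksmall Kk) (V_ldiff (KH Kk) Vw).
rewrite exprSr (mulrA (pnorm w)); set t := pnorm w * _; lra.
Qed.

Lemma square_closed_fixes k w h : K k -> V w -> H h -> w (mul k h) = w h.
Proof.
move=> Kk Vw Hh; apply/eqP; rewrite -subr_eq0; apply/eqP.
apply: (pnorm_eq0 (V_ldiff (KH Kk) Vw)) Hh; apply/eqP.
rewrite eq_le pnorm_ge0 andbT; apply: (@geometric_ub_le0 _ _ (pnorm w) (2/3)).
  by rewrite ger0_norm; lra.
by move=> m; exact: ldiff_geometric.
Qed.

End square_closed.
End no_small_subgroups.

Section translate_span.
Variables (R : realType) (G : eqType) (mul : G -> G -> G) (f : G -> R[i]).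

Inductive translate_span : (G -> R[i]) -> Prop :=
  | translate_span_f x : translate_span (fun h => f (mul x h))
  | translate_span_sub w1 w2 : translate_span w1 -> translate_span w2 ->
      translate_span (fun h => w1 h - w2 h).

Lemma translate_span_ldiff k w :
  (forall x y z, mul x (mul y z) = mul (mul x y) z) ->
  translate_span w -> translate_span (ldiff mul k w).
Proof.
move=> mulA; elim=> [x|w1 w2 _ IH1 _ IH2].
  have -> : ldiff mul k (fun h => f (mul x h)) =
      (fun h => f (mul (mul x k) h) - f (mul x h)).
    by apply/funext => h; rewrite /ldiff mulA.
  by apply: translate_span_sub; exact: translate_span_f.
have -> : ldiff mul k (fun h => w1 h - w2 h) =
    (fun h => ldiff mul k w1 h - ldiff mul k w2 h).
  by apply/funext => h; rewrite /ldiff; ring.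
exact: translate_span_sub.
Qed.

Lemma translate_span_lcomb (H : set G) n (fs phis : 'I_n -> G -> R[i]) w :
  (forall x h, H h -> f (mul x h) = \sum_(i < n) fs i x * phis i h) ->
  translate_span w -> exists a, forall h, H h -> w h = lcomb phis a h.
Proof.
move=> fdec; elim=> [x|w1 w2 _ [a1 w1E] _ [a2 w2E]].
  by exists (\row_i fs i x) => h Hh; rewrite fdec //; apply: eq_bigr => i _; rewrite mxE.
by exists (a1 - a2) => h Hh; rewrite lcombB w1E ?w2E.
Qed.

End translate_span.

Lemma ccontinuous_within_near (R : realType) (T : topologicalType) (H : set T)
    (phi : T -> R[i]) p (r : R) :
  ccontinuous_within H phi -> H p -> 0 < r ->
  \forall z \near p, H z -> cnorm1 (phi z - phi p) <= r.
Proof.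
move=> cphi Hp r0; have r2 : 0 < r / 2 by rewrite divr_gt0.
have phi_p : (@C_to_R2 R \o phi) @ within H (nbhs p) --> (@C_to_R2 R \o phi) p.
  by rewrite nbhs_subspace_in //; exact: cphi.
have phi_near : \forall z \near p,
    H z -> ball ((@C_to_R2 R \o phi) p) (r / 2) ((@C_to_R2 R \o phi) z).
  exact: phi_p (nbhsx_ballx _ _ r2).
apply: filterS phi_near => z /[apply]; rewrite /ball /= /C_to_R2.
case: (phi z) (phi p) => [a b] [c d] [/= ac bd].
by move: ac bd; rewrite /cnorm1 /ball /= (distrC a) (distrC b); lra.
Qed.

Lemma translate_small (R : realType) (G : topologicalType) (mul : G -> G -> G)
    (inv : G -> G) (e : G) (H : set G) (phi : G -> R[i]) p (r : R) :
  is_topological_group mul inv e -> compact_open_subgroup mul inv e H ->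
  ccontinuous_within H phi -> H p -> 0 < r ->
  \forall k \near e, cnorm1 (phi (mul k p) - phi p) <= r.
Proof.
move=> tgG coH cphi Hp r0; have [[_ HM _] _ _] := coH.
have mul_p := @grp_continuous_mulr _ _ _ _ tgG p e.
rewrite /continuous_at (grp_mul1g tgG) in mul_p.
have := mul_p _ (ccontinuous_within_near cphi Hp r0).
by apply: filterS2 (compact_open_subgroup_nbhs1 coH) => k Hk; apply; exact: HM.
Qed.

Lemma PG_sub_Cc_infty (R : realType) (G : topologicalType) (mul : G -> G -> G)
    (inv : G -> G) (e : G) :
  is_tdlc_group mul inv e -> @PG R G mul inv e `<=` Cc_infty mul inv e.
Proof.
move=> tdlcG f [Ccf [H [coH [n [fs [phis [_ [cphis fdec]]]]]]]].
have [tgG _ _ _] := tdlcG; have [[He HM _] _ _] := coH.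
pose V := translate_span mul f.
have V_ldiff k w : H k -> V w -> V (ldiff mul k w).
  by move=> _; exact: translate_span_ldiff (grp_mulA tgG).
have V_lcomb w : V w -> exists a, forall h, H h -> w h = lcomb phis a h.
  exact: translate_span_lcomb fdec.
have [P PH detP] := exists_determining_points e H phis.
pose small := translation_small mul e phis P.
have eN : nbhs e (H `&` small).
  apply: filterI (compact_open_subgroup_nbhs1 coH) _.
  apply: filter_forall => j; apply: filter_forall => i.
  apply: translate_small tgG coH (cphis i) (PH _ (mem_nth e (ltn_ord j))) _.
  exact: nss_radius_gt0.
have [K [coK KN]] := van_dantzig tdlcG eN; have [[_ KM _] _ _] := coK.
apply: (right_invariant_Cc_infty tgG coK Ccf) => x k Kk.
have fix_xk := square_closed_fixes (grp_mulA tgG) HM V_ldiff V_lcomb PH detP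
  (fun k Kk => (KN k Kk).1) (fun k Kk => KM k k Kk Kk) (fun k Kk => (KN k Kk).2).
by have := fix_xk k (fun h => f (mul x h)) e Kk (translate_span_f _ _ _) He;
  rewrite !(grp_mulg1 tgG).
Qed.

Theorem theorem4p2 (R : realType) (G : topologicalType)
  (mul : G -> G -> G) (inv : G -> G) (e : G) :
  is_tdlc_group mul inv e ->
  @Cc_infty R G mul inv e = @PG R G mul inv e.
Proof.
move=> tdlcG; apply/seteqP; split.
- exact: Cc_infty_sub_PG.
- exact: PG_sub_Cc_infty.
Qed.
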